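(* In the setting described in the context, assume $0<h<\varepsilon$. There is a constant $C$, independent of $h$ and $\varepsilon$, such that for all $v_h\in\widetilde V_h$, $$\varepsilon^{-1}\sum_{T\in\widetilde{\mathcal T}_h}|\varrho|_{0,\infty,T}\,\|v_h\|_{1,T}^2\le C\,\|v_h\|_h^2,$$ where $|\varrho|_{0,\infty,T}=\sup_T|\varrho|$, $\|v\|_{1,T}$ is the $H^1(T)$-norm, and $\|v_h\|_h=\bigl(\varepsilon^{-1}\sum_{T\in\widetilde{\mathcal T}_h}Q_T[\varrho(|v_h|^2+|\nabla v_h|^2)]\bigr)^{1/2}$.
   Context: $n\in\{1,2\}$; $\Omega\subset\mathbb R^{n+1}$ is a bounded polyhedral domain and $\phi:\overline\Omega\to\mathbb R$ is smooth with $0<c_0\le|\nabla\phi|\le c_1$ on $\overline\Omega$. Quadrature: an integer $q\ge0$ and a rule on the reference simplex with weights $\omega_i>0$, $\sum_{i=1}^L\omega_i=1$, points $\widehat b_i$, exact for polynomials of degree $\le q$; on a simplex $T$, $Q_T(g)=|T|\sum_{i=1}^L\omega_ig(b_{i,T})$, $b_{i,T}=\Phi_T(\widehat b_i)$ with $\Phi_T$ the affine map of the reference simplex onto $T$. $\sigma(r)=\cos^{2(q+1)}(r)$ for $|r|\le\pi/2$, $\sigma(r)=0$ otherwise; $\varrho(x)=\sigma(\phi(x)/\varepsilon)$. $\mathcal T_h$ is a regular (shape-regular) simplicial partition of $\overline\Omega$ with mesh size $h=\max_T\operatorname{diam}T$. $\widetilde{\mathcal T}_h=\{T\in\mathcal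 T_h:|\phi(b_{i,T})|\le\varepsilon\arccos(h/\varepsilon)\text{ for all }i=1,\dots,L\}$, $D_h=\bigcup_{T\in\widetilde{\mathcal T}_h}T$, and $\widetilde V_h=\{v\in C(D_h): v\text{ affine on each }T\in\widetilde{\mathcal T}_h\}$. *)

From HB Require Import structures.
From mathcomp Require Import all_boot all_order all_algebra.
From mathcomp Require Import all_classical all_reals all_analysis.
Set Implicit Arguments. Unset Strict Implicit. Unset Printing Implicit Defensive.
Import Order.TTheory GRing.Theory Num.Theory.
Import numFieldNormedType.Exports.
Local Open Scope classical_set_scope.
Local Open Scope ring_scope.

Section Defs.
Variables (R : realType) (d : nat).
Notation pt := 'rV[R]_d.

Definition enorm (x : pt) : R := Num.sqrt (\sum_i x ord0 i ^+ 2).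

Definition conv (S : set pt) : set pt :=
  [set x | exists (k : nat) (P : 'I_k -> pt) (l : 'I_k -> R),
     (forall i, S (P i)) /\ (forall i, 0 <= l i) /\ \sum_i l i = 1 /\
     x = \sum_i l i *: P i].

Definition simplex := 'I_d.+1 -> pt.
Definition sset (T : simplex) : set pt := conv (range T).

Definition edge_mx (T : simplex) : 'M[R]_d :=
  \matrix_(j, k) (T (lift ord0 j) ord0 k - T ord0 ord0 k).
Definition nondegenerate (T : simplex) : Prop := \det (edge_mx T) != 0.

(* Affine map Phi_T of the reference simplex onto T. *)
Definition affmap (T : simplex) (xh : pt) : pt := T ord0 + xh *m edge_mx T.

Definition ref_simplex : set pt :=
  [set x | (forall i, 0 <= x ord0 i) /\ \sum_i x ord0 i <= 1].

(* Iterated Lebesgue integral over the simplex {t_i >= 0, sum t_i <= s}. *)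
Fixpoint iint (k : nat) (s : R) (g : seq R -> R) : R :=
  match k with
  | 0 => g [::]
  | k'.+1 => Rintegral lebesgue_measure `[0, s]%classic
               (fun t => iint k' (s - t) (fun l => g (t :: l)))
  end.

Definition refint (f : pt -> R) : R :=
  iint d 1 (fun l => f (\row_i nth 0 l i)).

(* Integral over T, via the affine change of variables Phi_T. *)
Definition intT (T : simplex) (g : pt -> R) : R :=
  `|\det (edge_mx T)| * refint (g \o affmap T).
Definition vol (T : simplex) : R := intT T (fun _ => 1).

Definition poly_le (q : nat) (p : pt -> R) : Prop :=
  exists c : {ffun 'I_d -> 'I_q.+1} -> R, forall x,
    p x = \sum_(a : {ffun 'I_d -> 'I_q.+1} | (\sum_i (a i : nat) <= q)%N) c a * \prod_i x ord0 i ^+ a i.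

Definition quad_exact (q L : nat) (w : 'I_L -> R) (bh : 'I_L -> pt) : Prop :=
  forall p, poly_le q p -> refint p = refint (fun _ => 1) * \sum_i w i * p (bh i).

Definition QT (L : nat) (w : 'I_L -> R) (bh : 'I_L -> pt) (T : simplex)
  (g : pt -> R) : R := vol T * \sum_i w i * g (affmap T (bh i)).

Definition sigma (q : nat) (r : R) : R :=
  if `|r| <= pi / 2 then cos r ^+ (q.+1).*2 else 0.
Definition rho (q : nat) (phi : pt -> R) (eps : R) (x : pt) : R :=
  sigma q (phi x / eps).

Definition unitv (k : 'I_d) : pt := delta_mx ord0 k.
Definition gradnorm (f : pt -> R) (x : pt) : R :=
  Num.sqrt (\sum_k ('D_(unitv k) f x) ^+ 2).

Fixpoint dirder (vs : seq pt) (f : pt -> R) : pt -> R :=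
  if vs is v :: vs' then (fun x => 'D_v (dirder vs' f) x) else f.
Definition smooth_on (U : set pt) (f : pt -> R) : Prop :=
  forall vs, (forall x, U x -> {for x, continuous (dirder vs f)}) /\
             (forall v x, U x -> derivable (dirder vs f) x v).

Definition polyhedral_domain (Om : set pt) : Prop :=
  open Om /\ connected Om /\ Om !=set0 /\ bounded_set Om /\
  exists (k : nat) (S : 'I_k -> simplex), (forall i, nondegenerate (S i)) /\
    closure Om = [set x | exists i, sset (S i) x].

Definition diam (S : set pt) : R :=
  sup [set r | exists x y, S x /\ S y /\ r = enorm (x - y)].
Definition inradius (S : set pt) : R :=
  sup [set r | 0 < r /\ exists c, [set x | enorm (x - c) < r] `<=` S].

Definition is_mesh (Om : set pt) (nT : nat) (M : 'I_nT -> simplex) : Prop :=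
  (forall i, nondegenerate (M i)) /\
  [set x | exists i, sset (M i) x] = closure Om /\
  (forall i j, i != j -> sset (M i) <> sset (M j) /\
      sset (M i) `&` sset (M j) = conv (range (M i) `&` range (M j))).

Definition meshsize (nT : nat) (M : 'I_nT -> simplex) : R :=
  \big[Num.max/0]_i diam (sset (M i)).

Definition shape_bounded (sg : R) (nT : nat) (M : 'I_nT -> simplex) : Prop :=
  forall i, diam (sset (M i)) <= sg * inradius (sset (M i)).

Definition Ttilde (phi : pt -> R) (L : nat) (bh : 'I_L -> pt) (eps h : R)
  (T : simplex) : bool :=
  [forall l, `|phi (affmap T (bh l))| <= eps * acos (h / eps)].

Definition Dh (phi : pt -> R) (L : nat) (bh : 'I_L -> pt) (eps h : R)
  (nT : nat) (M : 'I_nT -> simplex) : set pt :=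
  [set x | exists i, Ttilde phi bh eps h (M i) /\ sset (M i) x].

Definition in_Vtilde (phi : pt -> R) (L : nat) (bh : 'I_L -> pt) (eps h : R)
  (nT : nat) (M : 'I_nT -> simplex) (v : pt -> R) : Prop :=
  {within Dh phi bh eps h M, continuous v} /\
  forall i, Ttilde phi bh eps h (M i) ->
    exists (a : R) (b : pt), forall x, sset (M i) x ->
      v x = a + \sum_k x ord0 k * b ord0 k.

Definition gradT (T : simplex) (v : pt -> R) : pt :=
  (invmx (edge_mx T) *m \col_j (v (T (lift ord0 j)) - v (T ord0)))^T.

(* Squared H^1(T) norm of the affine function v|_T. *)
Definition H1sq (T : simplex) (v : pt -> R) : R :=
  intT T (fun x => v x ^+ 2 + enorm (gradT T v) ^+ 2).

Definition supnormT (T : simplex) (f : pt -> R) : R :=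
  sup [set r | exists x, sset T x /\ r = `|f x|].

Definition hnorm2 (phi : pt -> R) (q L : nat) (w : 'I_L -> R) (bh : 'I_L -> pt)
  (eps h : R) (nT : nat) (M : 'I_nT -> simplex) (v : pt -> R) : R :=
  eps^-1 * \sum_(i | Ttilde phi bh eps h (M i))
     QT w bh (M i) (fun x => rho q phi eps x * (v x ^+ 2 + enorm (gradT (M i) v) ^+ 2)).

Definition lhs4 (phi : pt -> R) (q L : nat) (bh : 'I_L -> pt)
  (eps h : R) (nT : nat) (M : 'I_nT -> simplex) (v : pt -> R) : R :=
  eps^-1 * \sum_(i | Ttilde phi bh eps h (M i))
     supnormT (M i) (rho q phi eps) * H1sq (M i) v.

End Defs.

From Pilot Require Import Defs.
From HB Require Import structures.
From mathcomp Require Import all_boot all_order all_algebra.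
From mathcomp Require Import all_classical all_reals all_analysis.
From mathcomp Require Import ring lra.
Set Implicit Arguments. Unset Strict Implicit. Unset Printing Implicit Defensive.
Import Order.TTheory GRing.Theory Num.Theory.
Import numFieldNormedType.Exports.
Local Open Scope classical_set_scope.
Local Open Scope ring_scope.

(* Fix a selected element T and the quadrature node y = Phi_T(b_1) of T.
   Since |phi(y)| <= eps arccos(h/eps), cos(phi(y)/eps) >= h/eps, while by the
   mean value theorem phi/eps varies by at most K h/eps on T, K = (n+1) c1.
   As cos is 1-Lipschitz, |cos(phi/eps)| <= (1 + K) cos(phi(y)/eps) on T, i.e.
   rho <= (1 + K)^(2(q+1)) rho(y) on T.  For v affine on T,
   v^2 + |grad v|^2 <= A (v(y)^2 + |grad v|^2) on T, with A depending only on
   the diameter of Omega.  Hence sup_T rho ||v||_{1,T}^2 is at most a fixed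
   multiple of |T| w_1 rho(y) (v(y)^2 + |grad v|^2), which is one of the
   nonnegative terms of Q_T[rho (v^2 + |grad v|^2)]. *)

Lemma MVT_from0 (R : realType) (F dF : R -> R) (t : R) :
  (forall s : R, `|s| <= `|t| -> is_derive s 1 F (dF s)) ->
  exists2 c, `|c| <= `|t| & F t - F 0 = dF c * t.
Proof.
move=> isdF; have [t_lt0|t_ge0] := ltP t 0.
  case: (@MVT_segment R F dF t 0 (ltW t_lt0)).
  - move=> x /[!in_itv] /= /andP[tx x0].
    by apply: isdF; rewrite (ltr0_norm x0) (ltr0_norm t_lt0) lerN2 ltW.
  - apply: derivable_within_continuous => x /[!in_itv] /= /andP[tx x0].
    apply: (@ex_derive _ _ _ _ _ _ (dF x)); apply: isdF; rewrite (ltr0_norm t_lt0).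
    have [x_lt0|x_ge0] := ltP x 0; first by rewrite ltr0_norm // lerN2.
    by rewrite (@le_anti _ _ x 0) ?x0 ?x_ge0 // normr0 oppr_ge0 ltW.
  move=> c /[!in_itv] /= /andP[tc c0] hc; exists c.
    by rewrite (ltr0_norm t_lt0) ler0_norm // lerN2.
  by rewrite -opprB hc sub0r mulrN opprK.
case: (@MVT_segment R F dF 0 t t_ge0).
- move=> x /[!in_itv] /= /andP[x0 xt].
  by apply: isdF; rewrite !ger0_norm ?ltW // (lt_trans x0).
- apply: derivable_within_continuous => x /[!in_itv] /= /andP[x0 xt].
  by apply: (@ex_derive _ _ _ _ _ _ (dF x)); apply: isdF; rewrite !ger0_norm.
move=> c /[!in_itv] /= /andP[c0 ct] hc; exists c; last by rewrite hc subr0.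
by rewrite (ger0_norm t_ge0) (ger0_norm c0).
Qed.

Section DirectionalDerivative.
Variables (R : realType) (V : normedModType R).
Implicit Types (f : V -> R) (x v a b : V).

Lemma dquot_along_line f x v s0 :
  (fun h : R => h^-1 *: (((fun s : R => f (s *: v + x)) \o shift s0) (h *: (1:R))
                         - f (s0 *: v + x)))
  = (fun h : R => h^-1 *: ((f \o shift (s0 *: v + x)) (h *: v) - f (s0 *: v + x))).
Proof.
apply: funext => h /=; congr (_ *: (f _ - _)).
by rewrite /= [_%:A]mulr1 scalerDl addrA.
Qed.

Lemma derivable_along_line f x v s0 :
  derivable f (s0 *: v + x) v -> derivable (fun s : R => f (s *: v + x)) s0 1.
Proof. by rewrite /derivable dquot_along_line. Qed.

Lemma derive_along_line f x v s0 :
  'D_1 (fun s : R => f (s *: v + x)) s0 = 'D_v f (s0 *: v + x).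
Proof. by rewrite /derive dquot_along_line. Qed.

(* The mean value theorem on [0, t] rewrites the quotient as 'D_b f at a point
   of the segment from t a + z to t (a + b) + z, where 'D_b f is continuous. *)
Lemma shifted_dquot_cvg f (U : set V) z a b :
  open U -> U z -> (forall w, U w -> derivable f w b) ->
  {for z, continuous ('D_b f)} ->
  (fun h : R => h^-1 *: (f (h *: b + (h *: a + z)) - f (h *: a + z))) @ 0^'
    --> 'D_b f z.
Proof.
move=> oU Uz dU cz.
apply/cvgrPdist_lt => e e0.
have : \forall w \near z, U w /\ `|'D_b f z - 'D_b f w| < e.
  near=> w; split; last by near: w; apply: cvgr_dist_lt.
  by near: w; apply: open_nbhs_nbhs; split.
move=> /nbhs_normP [del del0 Hdel].
rewrite /dnbhs /within; apply/nbhs_normP.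
set r := del / (`|a| + `|b| + 1).
have abp : 0 < `|a| + `|b| + 1 by rewrite ltr_wpDl // addr_ge0.
exists r => /=; first by rewrite /r divr_gt0.
move=> t /=; rewrite sub0r normrN => Ht t_neq0.
have Hta : `|t| * (`|a| + `|b|) < del.
  apply: (le_lt_trans (y := `|t| * (`|a| + `|b| + 1))).
    by rewrite ler_wpM2l // lerDl.
  by rewrite -ltr_pdivlMr.
have near_z s : `|s| <= `|t| ->
    U (s *: b + (t *: a + z)) /\ `|'D_b f z - 'D_b f (s *: b + (t *: a + z))| < e.
  move=> hs; apply: Hdel => /=.
  rewrite addrA [_ + z]addrC opprD addrA subrr sub0r normrN.
  apply: le_lt_trans Hta.
  apply: (le_trans (ler_normD _ _)); rewrite !normrZ mulrDr addrC.
  by rewrite lerD2l ler_wpM2r.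
pose F := fun s : R => f (s *: b + (t *: a + z)).
pose dF := fun s : R => 'D_b f (s *: b + (t *: a + z)).
have isdF s : `|s| <= `|t| -> is_derive s (1:R) F (dF s).
  move=> hs; have [Us _] := near_z s hs; split.
    exact/derivable_along_line/dU.
  by rewrite derive_along_line.
have [c hc hF] := MVT_from0 isdF.
have F0 : F 0 = f (t *: a + z) by rewrite /F scale0r add0r.
have -> : t^-1 *: (f (t *: b + (t *: a + z)) - f (t *: a + z)) = dF c.
  by rewrite -F0 -/(F t) hF /GRing.scale /= mulrC -mulrA mulfV ?mulr1.
by have [_ ->] := near_z c hc.
Unshelve. all: by end_near. Qed.

Lemma derive_dirD f (U : set V) z a b :
  open U -> U z -> (forall w, U w -> forall v, derivable f w v) ->
  {for z, continuous ('D_b f)} ->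
  'D_(a + b) f z = 'D_a f z + 'D_b f z.
Proof.
move=> oU Uz dU cz.
have split_dquot : (fun h : R => h^-1 *: ((f \o shift z) (h *: (a + b)) - f z)) =
  (fun h : R => h^-1 *: (f (h *: b + (h *: a + z)) - f (h *: a + z))) +
  (fun h : R => h^-1 *: ((f \o shift z) (h *: a) - f z)).
  apply: funext => h; rewrite [RHS]/GRing.add /= -scalerDr; congr (_ *: _).
  by rewrite addrA subrK scalerDr [h *: a + h *: b]addrC -addrA.
have : (fun h : R => h^-1 *: ((f \o shift z) (h *: (a + b)) - f z)) @ 0^'
   --> 'D_b f z + 'D_a f z.
  rewrite split_dquot; apply: cvgD; last exact: dU.
  exact: shifted_dquot_cvg (fun w Uw => dU w Uw b) cz.
by rewrite [RHS]addrC; apply: cvg_lim.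
Qed.

Lemma derive_dirZ f z v (c : R) : derivable f z v ->
  'D_(c *: v) f z = c * 'D_v f z.
Proof.
move=> dv.
have line_at0 u : 'D_u f z = 'D_1 (fun s : R => f (s *: u + z)) 0.
  by rewrite derive_along_line scale0r add0r.
rewrite !line_at0.
have -> : (fun s : R => f (s *: (c *: v) + z)) =
          (fun s : R => f (s *: v + z)) \o (c \*: id).
  by apply: funext => s /=; rewrite scalerA mulrC.
rewrite -derive1E derive1_comp.
- rewrite !derive1E /= scaler0 mulrC; congr (_ * _).
  by rewrite deriveZ ?derive_id // /GRing.scale /= mulr1.
- exact/derivableZ/derivable_id.
- by rewrite /= scaler0; apply: derivable_along_line; rewrite scale0r add0r.
Qed.

End DirectionalDerivative.

Section Euclidean.
Variables (R : realType) (d : nat).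
Implicit Types (f : 'rV[R]_d -> R) (u : 'rV[R]_d).

Lemma enorm_ge0 u : 0 <= enorm u.
Proof. exact: sqrtr_ge0. Qed.

Lemma coord_le_sqrt_sumsq (g : 'I_d -> R) k : `|g k| <= Num.sqrt (\sum_i g i ^+ 2).
Proof.
rewrite -sqrtr_sqr; apply: ler_wsqrtr.
by rewrite (bigD1 k) //= lerDl; apply: sumr_ge0 => i _; exact: sqr_ge0.
Qed.

Lemma coord_le_enorm u k : `|u ord0 k| <= enorm u.
Proof. exact: (coord_le_sqrt_sumsq (fun i => u ord0 i)). Qed.

Lemma dot_le_enorm u (g : 'I_d -> R) :
  `|\sum_k u ord0 k * g k| <= d%:R * (enorm u * Num.sqrt (\sum_i g i ^+ 2)).
Proof.
apply: (le_trans (ler_norm_sum _ _ _)).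
rewrite -[d in d%:R]card_ord mulr_natl -sumr_const; apply: ler_sum => k _.
by rewrite normrM ler_pM ?coord_le_enorm ?coord_le_sqrt_sumsq.
Qed.

Lemma derive_dir_linear f (U : set 'rV[R]_d) z : open U -> U z ->
  (forall w, U w -> forall v, derivable f w v) ->
  (forall v, {for z, continuous ('D_v f)}) ->
  forall u, 'D_u f z = \sum_k u ord0 k * 'D_(unitv R k) f z.
Proof.
move=> oU Uz dU cU u.
rewrite {1}(row_sum_delta u).
rewrite (big_morph (fun v => 'D_v f z) (id1 := 0) (op1 := +%R)).
- by apply: eq_bigr => k _; rewrite derive_dirZ //; exact: dU.
- by move=> a b /=; apply: derive_dirD oU Uz dU (cU b).
- exact: derive0.
Qed.

Lemma mean_value_gradnorm f (U S : set 'rV[R]_d) c1 x y :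
  open U -> S `<=` U ->
  (forall w, U w -> forall v, derivable f w v) ->
  (forall v w, U w -> {for w, continuous ('D_v f)}) ->
  (forall w, S w -> gradnorm f w <= c1) ->
  (forall t : R, 0 <= t <= 1 -> S (t *: (x - y) + y)) ->
  `|f x - f y| <= d%:R * (enorm (x - y) * c1).
Proof.
move=> oU SU dU cU gS seg.
pose G t := f (t *: (x - y) + y).
pose dG t := 'D_(x - y) f (t *: (x - y) + y).
have isdG (t : R) : 0 <= t <= 1 -> is_derive t (1:R) G (dG t).
  move=> t01; split; last by rewrite derive_along_line.
  by apply/derivable_along_line/dU/SU/seg.
have [c /[!in_itv] /= c01 hc] : exists2 c, c \in `[(0:R), 1] & G 1 - G 0 = dG c * (1 - 0).
  apply: MVT_segment => //.
    by move=> t /[!in_itv] /= /andP[t0 t1]; apply: isdG; rewrite !ltW.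
  apply: derivable_within_continuous => t /[!in_itv] /= t01.
  by apply: (@ex_derive _ _ _ _ _ _ (dG t)); apply: isdG.
have Sc := seg c c01.
have -> : f x - f y = G 1 - G 0 by rewrite /G scale1r subrK scale0r add0r.
rewrite hc subr0 mulr1 /dG (derive_dir_linear oU (SU _ Sc) dU) => [|v]; last first.
  exact: cU (SU _ Sc).
apply: le_trans (dot_le_enorm _ _) _.
by rewrite ler_wpM2l // ler_wpM2l ?enorm_ge0 // gS.
Qed.

End Euclidean.

Section LebesgueIntegral.
Variable (R : realType).
Local Notation mu := (@lebesgue_measure R).

(* No measurability is assumed: the integrands of [iint] are arbitrary, so the
   comparison goes through the suprema over simple functions defining the
   integral of a nonnegative function. *)
Lemma ge0_subset_le_integral (D D' : set R) (f g : R -> R) : D `<=` D' ->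
  (forall x, D x -> 0 <= g x <= f x) -> (forall x, D' x -> 0 <= f x) ->
  (\int[mu]_(x in D) (g x)%:E <= \int[mu]_(x in D') (f x)%:E)%E.
Proof.
move=> DD' gf f0.
rewrite ge0_integralE => [|x /gf/andP[g0 _]]; last by rewrite lee_fin.
rewrite [X in (_ <= X)%E]ge0_integralE => [|x /f0]; last by rewrite lee_fin.
apply: ereal_sup_le => _ [h /= hle <-]; exists h => //= x.
apply: (le_trans (hle x)); rewrite /patch.
case: ifPn => [/[!inE] Dx|_].
  by rewrite mem_set ?lee_fin; [case/andP: (gf x Dx)|exact: DD'].
by case: ifPn => [/[!inE] /f0|_] //; rewrite lee_fin.
Qed.

Lemma integral_cst_itv0 (s M : R) : 0 <= s ->
  (\int[mu]_(x in `[0%R, s]) M%:E = (M * s)%:E)%E.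
Proof.
move=> s0; rewrite integral_cst //= lebesgue_measure_itv /= lte_fin.
by case: ltgtP s0 => // [_ _|<- _]; rewrite ?oppr0 ?addr0 ?EFinM // mule0 mulr0.
Qed.

Lemma Rintegral_cst_itv0 (s c : R) : 0 <= s ->
  Rintegral mu `[0%R, s]%classic (fun=> c) = c * s.
Proof. by move=> s0; rewrite /Rintegral integral_cst_itv0. Qed.

Lemma ge0_subset_le_Rintegral (D : set R) (s M : R) (f g : R -> R) :
  0 <= s -> D `<=` `[0%R, s]%classic ->
  (forall x, D x -> 0 <= g x <= f x) ->
  (forall x, `[0%R, s]%classic x -> 0 <= f x <= M) ->
  Rintegral mu D g <= Rintegral mu `[0%R, s]%classic f.
Proof.
move=> s0 DD gf fM.
have M0 : 0 <= M.
  have /andP[f0 f0M] : 0 <= f 0 <= M by apply: fM; rewrite /= in_itv /= lexx s0.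
  exact: le_trans f0M.
have le_gf := ge0_subset_le_integral DD gf (fun x Dx => proj1 (andP (fM x Dx))).
have f_fin : (\int[mu]_(x in `[0%R, s]%classic) (f x)%:E <= (M * s)%:E)%E.
  by rewrite -integral_cst_itv0 //; apply: ge0_subset_le_integral.
have g_ge0 : (0 <= \int[mu]_(x in D) (g x)%:E)%E.
  by apply: integral_ge0 => x /gf/andP[g0 _]; rewrite lee_fin.
apply: fine_le => //.
- by rewrite ge0_fin_numE // (le_lt_trans le_gf) // (le_lt_trans f_fin) // ltry.
- by rewrite ge0_fin_numE ?(le_trans g_ge0 le_gf) // (le_lt_trans f_fin) // ltry.
Qed.

End LebesgueIntegral.

Section IteratedIntegral.
Variable (R : realType).

(* The domain of integration of [iint k s]. *)
Definition simplex_seq (k : nat) (s : R) (l : seq R) : Prop :=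
  size l = k /\ (forall x, x \in l -> 0 <= x) /\ \sum_(x <- l) x <= s.

Lemma simplex_seq_cons k s t l :
  0 <= t -> simplex_seq k (s - t) l -> simplex_seq k.+1 s (t :: l).
Proof.
move=> t0 [sz [pos sm]]; split; first by rewrite /= sz.
split; first by move=> x; rewrite inE => /orP[/eqP->|/pos].
by rewrite big_cons -lerBrDl.
Qed.

Lemma iint_bounds k s g M : 0 <= s -> 0 <= M ->
  (forall l, simplex_seq k s l -> 0 <= g l <= M) -> 0 <= iint k s g <= M * s ^+ k.
Proof.
elim: k s g => [|k IH] s g s0 M0 gM /=.
  by rewrite expr0 mulr1; apply: gM; rewrite /simplex_seq big_nil.
have inner t : `[0%R, s]%classic t ->
    0 <= iint k (s - t) (fun l => g (t :: l)) <= M * s ^+ k.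
  rewrite /= in_itv /= => /andP[t0 ts].
  have st0 : 0 <= s - t by rewrite subr_ge0.
  have /andP[-> /le_trans->] // := IH (s - t) (fun l => g (t :: l)) st0 M0
    (fun l dl => gM _ (simplex_seq_cons t0 dl)).
  by rewrite ler_wpM2l // lerXn2r // ?nnegrE // lerBlDr lerDl.
apply/andP; split; first by apply: Rintegral_ge0 => t /inner /andP[].
rewrite exprSr mulrA -(Rintegral_cst_itv0 (M * s ^+ k) s0).
apply: (@ge0_subset_le_Rintegral _ _ s (M * s ^+ k)) => //.
by move=> t _; rewrite lexx andbT mulr_ge0 // exprn_ge0.
Qed.

(* Only t in [0, s/2] is kept, where the inner simplex still has size s/2. *)
Lemma iint1_ge k : exists2 a : R, 0 < a &
  forall s, 0 <= s -> a * s ^+ k <= iint k s (fun=> 1).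
Proof.
elim: k => [|k [a a0 IH]]; first by exists 1 => // s _; rewrite /= expr0 mulr1.
exists (a / 2 ^+ k.+1) => [|s s0 /=]; first by rewrite divr_gt0 // exprn_gt0.
have s20 : 0 <= s / 2 by rewrite divr_ge0.
have <- : Rintegral lebesgue_measure `[0%R, s / 2]%classic (fun=> a * (s / 2) ^+ k)
    = a / 2 ^+ k.+1 * s ^+ k.+1.
  by rewrite Rintegral_cst_itv0 // -mulrA -exprSr expr_div_n mulrA mulrAC.
apply: (@ge0_subset_le_Rintegral _ _ s (s ^+ k)) => // [t|t|t].
- by rewrite /= !in_itv /= => /andP[-> ts] /=; lra.
- rewrite /= in_itv /= => /andP[t0 ts].
  rewrite mulr_ge0 ?exprn_ge0 ?(ltW a0) //=.
  apply: le_trans (IH (s - t) _); last by rewrite subr_ge0; lra.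
  by rewrite ler_wpM2l ?(ltW a0) // lerXn2r // ?nnegrE ?subr_ge0; lra.
- rewrite /= in_itv /= => /andP[t0 ts].
  have st0 : 0 <= s - t by rewrite subr_ge0.
  have /andP[-> /le_trans->] // := @iint_bounds k (s - t) (fun=> 1) 1 st0 ler01
    (fun l _ => introT andP (conj ler01 (lexx 1))).
  by rewrite mul1r lerXn2r // ?nnegrE // lerBlDr lerDl.
Qed.

End IteratedIntegral.

Section ReferenceSimplex.
Variables (R : realType) (n : nat).

Lemma simplex_seq_ref (l : seq R) :
  simplex_seq n 1 l -> ref_simplex (\row_(i < n) nth 0 l i).
Proof.
move=> [sz [pos sm]]; split.
  by move=> i; rewrite mxE; apply: pos; apply: mem_nth; rewrite sz.
suff -> : \sum_i (\row_(i < n) nth 0 l i) ord0 i = \sum_(x <- l) x by [].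
by rewrite (big_nth 0) sz big_mkord; apply: eq_bigr => i _; rewrite mxE.
Qed.

Lemma refint_le (F : 'rV[R]_n -> R) M : 0 <= M ->
  (forall x, ref_simplex x -> 0 <= F x <= M) -> refint F <= M.
Proof.
move=> M0 FM.
have /andP[_] := @iint_bounds R n 1 (fun l => F (\row_i nth 0 l i)) M ler01 M0
  (fun l dl => FM _ (simplex_seq_ref dl)).
by rewrite expr1n mulr1.
Qed.

Lemma refint1_gt0 : 0 < refint (fun _ : 'rV[R]_n => 1).
Proof.
have [a a0 /(_ 1 ler01)] := @iint1_ge R n.
by rewrite expr1n mulr1; apply: lt_le_trans.
Qed.

End ReferenceSimplex.

Section Simplex.
Variables (R : realType) (d : nat).
Local Notation pt := 'rV[R]_d.

Lemma conv_convex (S : set pt) x y (t : R) : Defs.conv S x -> Defs.conv S y ->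
  0 <= t <= 1 -> Defs.conv S (t *: (x - y) + y).
Proof.
move=> [k1 [P1 [l1 [SP1 [l10 [l11 ->]]]]]] [k2 [P2 [l2 [SP2 [l20 [l21 ->]]]]]].
move=> /andP[t0 t1].
have sl (i : 'I_k1) : fintype.split (lshift k2 i) = inl i := unsplitK (inl i).
have sr (i : 'I_k2) : fintype.split (rshift k1 i) = inr i := unsplitK (inr i).
exists (k1 + k2)%N.
exists (fun i => match fintype.split i with inl a => P1 a | inr b => P2 b end).
exists (fun i => match fintype.split i with
                 | inl a => t * l1 a | inr b => (1 - t) * l2 b end).
split; first by move=> i; case: (fintype.split i).
split; first by move=> i; case: (fintype.split i) => a; apply: mulr_ge0 => //; lra.
split.
  rewrite big_split_ord /=.
  under eq_bigr do rewrite sl.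
  under [X in _ + X]eq_bigr do rewrite sr.
  by rewrite -!mulr_sumr l11 l21; ring.
rewrite big_split_ord /=.
rewrite [X in _ = X + _](eq_bigr (fun i => t *: (l1 i *: P1 i))); last first.
  by move=> i _; rewrite sl scalerA.
rewrite [X in _ = _ + X](eq_bigr (fun i => (1 - t) *: (l2 i *: P2 i))); last first.
  by move=> i _; rewrite sr scalerA.
rewrite -!scaler_sumr scalerBr scalerBl scale1r.
by rewrite -addrA [- _ + _]addrC.
Qed.

Lemma sset_vertex (T : simplex R d) j : sset T (T j).
Proof.
exists 1%N, (fun=> T j), (fun=> 1); split; first by move=> _; exists j.
by rewrite !big_ord1 scale1r.
Qed.

Lemma affmapE (T : simplex R d) (xi : pt) :
  affmap T xi = T ord0 + \sum_i xi ord0 i *: (T (lift ord0 i) - T ord0).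
Proof.
rewrite /affmap mulmx_sum_row; congr (_ + _); apply: eq_bigr => i _.
by congr (_ *: _); apply/rowP => k; rewrite !mxE.
Qed.

(* Barycentric coordinates of Phi_T(xi): 1 - sum_i xi_i at vertex 0 and xi_i at
   vertex i + 1. *)
Lemma affmap_in_sset (T : simplex R d) xi : ref_simplex xi -> sset T (affmap T xi).
Proof.
move=> [xi0 xi1].
pose l j := if unlift ord0 j is Some i then xi ord0 i else 1 - \sum_i xi ord0 i.
have l0 : l ord0 = 1 - \sum_i xi ord0 i by rewrite /l unlift_none.
have lS i : l (lift ord0 i) = xi ord0 i by rewrite /l liftK.
exists d.+1, T, l; split; first by move=> i; exists i.
split.
  by move=> j; rewrite /l; case: (unlift ord0 j) => [i|]; rewrite ?subr_ge0.
split.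
  by rewrite big_ord_recl l0; under [X in _ + X]eq_bigr do rewrite lS; rewrite subrK.
rewrite big_ord_recl l0 affmapE; under [X in _ = _ + X]eq_bigr do rewrite lS.
rewrite scalerBl scale1r -addrA; congr (_ + _).
rewrite (eq_bigr (fun i => xi ord0 i *: T (lift ord0 i) - xi ord0 i *: T ord0)).
  by rewrite sumrB scaler_suml addrC.
by move=> i _; rewrite scalerBr.
Qed.

Lemma gradT_affine (T : simplex R d) (v : pt -> R) a (b : pt) :
  Defs.nondegenerate T ->
  (forall x, sset T x -> v x = a + \sum_k x ord0 k * b ord0 k) ->
  gradT T v = b.
Proof.
move=> nd hv.
rewrite /gradT; set c := (X in invmx _ *m X).
have -> : c = edge_mx T *m b^T.
  apply/colP => j; rewrite !mxE !hv; try exact: sset_vertex.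
  rewrite opprD addrACA subrr add0r -sumrB.
  by apply: eq_bigr => k _; rewrite !mxE mulrBl.
by rewrite mulKmx ?trmxK // unitmxE unitfE.
Qed.

Lemma affine_diff (T : simplex R d) (v : pt -> R) a (b : pt) x y :
  (forall x, sset T x -> v x = a + \sum_k x ord0 k * b ord0 k) ->
  sset T x -> sset T y ->
  v x = v y + \sum_k (x - y) ord0 k * b ord0 k.
Proof.
move=> hv Tx Ty; rewrite !hv // -addrA; congr (_ + _).
by rewrite -big_split /=; apply: eq_bigr => k _; rewrite !mxE; ring.
Qed.

End Simplex.

Section Mesh.
Variables (R : realType) (d : nat).
Local Notation pt := 'rV[R]_d.

Lemma coord_le_mxnorm (v : pt) i : `|v ord0 i| <= `|v|.
Proof.
by rewrite [leRHS]/Num.norm /= mx_normrE; apply/bigmax_geP; right; exists (ord0, i).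
Qed.

Lemma closure_coord_bounded (A : set pt) : bounded_set A ->
  exists2 B : R, 0 < B & forall x, closure A x -> forall k, `|x ord0 k| <= B.
Proof.
move=> [M [Mreal HM]].
have /HM HA : M < `|M| + 1 by rewrite (le_lt_trans (real_ler_norm Mreal)) // ltrDl.
exists (`|M| + 2); first by rewrite ltr_wpDl.
move=> x cx k; apply: le_trans (coord_le_mxnorm x k) _.
have : closed_ball (0 : pt) (`|M| + 2) x.
  apply: closureS cx => y Ay; rewrite -ball_normE /= sub0r normrN.
  by rewrite (le_lt_trans (HA y Ay)) // ltrD2l ltr1n.
by rewrite closed_ballE ?ltr_wpDl // /closed_ball_ /= sub0r normrN.
Qed.

Lemma closure_dist_bounded (A : set pt) : bounded_set A ->
  exists H0, forall x y, closure A x -> closure A y -> enorm (x - y) <= H0.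
Proof.
move=> /closure_coord_bounded[B B0 hB].
exists (Num.sqrt (\sum_(k < d) (2 * B) ^+ 2)) => x y cx cy.
apply: ler_wsqrtr; apply: ler_sum => k _.
rewrite -real_normK ?num_real // lerXn2r // ?nnegrE ?mulr_ge0 ?(ltW B0) // !mxE.
by have := hB x cx k; have := hB y cy k; have := ler_normB (x ord0 k) (y ord0 k); lra.
Qed.

Lemma enorm_le_diam (S : set pt) H0 x y :
  (forall x y, S x -> S y -> enorm (x - y) <= H0) -> S x -> S y ->
  enorm (x - y) <= diam S.
Proof.
move=> hH Sx Sy; apply: sup_upper_bound; last by exists x, y.
split; first by exists (enorm (x - y)); exists x, y.
by exists H0 => r [x' [y' [Sx' [Sy' ->]]]]; exact: hH.
Qed.

Lemma sset_mesh_closure (Om : set pt) nT (M : 'I_nT -> simplex R d) i :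
  is_mesh Om M -> sset (M i) `<=` closure Om.
Proof. by move=> mesh x Tx; rewrite -mesh.2.1; exists i. Qed.

Lemma dist_le_meshsize (Om : set pt) nT (M : 'I_nT -> simplex R d) H0 i x y :
  (forall x y, closure Om x -> closure Om y -> enorm (x - y) <= H0) ->
  is_mesh Om M -> sset (M i) x -> sset (M i) y -> enorm (x - y) <= meshsize M.
Proof.
move=> hH0 mesh Tx Ty; apply: le_trans _ (le_bigmax _ _ i).
apply: (enorm_le_diam (H0 := H0)) Tx Ty => x' y'.
by move=> /(sset_mesh_closure mesh) Ox' /(sset_mesh_closure mesh) Oy'; apply: hH0.
Qed.

Lemma smooth_lipschitz_sset (f : pt -> R) (U : set pt) c1 (T : simplex R d) x y :
  open U -> sset T `<=` U -> smooth_on U f ->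
  (forall z, sset T z -> gradnorm f z <= c1) -> sset T x -> sset T y ->
  `|f x - f y| <= d%:R * (enorm (x - y) * c1).
Proof.
move=> oU TU smf hc1 Tx Ty; apply: mean_value_gradnorm oU TU _ _ hc1 _.
- by move=> w Uw v; exact: (smf [::]).2.
- by move=> v w Uw; exact: (smf [:: v]).1.
- by move=> t; apply: conv_convex.
Qed.

End Mesh.

Section Sigma.
Variable (R : realType).

Lemma cos_lipschitz (a b : R) : `|cos a - cos b| <= `|a - b|.
Proof.
wlog ab : a b / a <= b.
  by move=> H; have [/H//|/ltW/H] := leP a b; rewrite distrC (distrC b).
rewrite distrC (distrC a).
have [c _ ->] := @MVT_segment R cos (fun x => - sin x) a b ab
  (fun x _ => is_derive_cos x) (continuous_subspaceT (fun x => @continuous_cos R x)).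
by rewrite normrM normrN ler_piMl ?sin_max.
Qed.

Lemma acos_le_pihalf (r : R) : 0 <= r <= 1 -> acos r <= pi / 2.
Proof.
move=> /andP[r0 r1].
have r11 : -1 <= r <= 1 by rewrite r1 andbT (le_trans _ r0) // lerN10.
rewrite leNgt; apply/negP => h.
have : cos (acos r) < cos (pi / 2).
  rewrite ltr_cos // ?in_itv /= ?acos_ge0 ?acos_lepi //.
  by rewrite divr_ge0 ?pi_ge0 //= ler_pdivrMr // ler_peMr ?pi_ge0 // ler1n.
by rewrite acosK ?in_itv //= cos_pihalf ltNge r0.
Qed.

Lemma cos_ge_acos (r t : R) : 0 <= r <= 1 -> `|t| <= acos r -> r <= cos t.
Proof.
move=> /andP[r0 r1] ht.
have r11 : -1 <= r <= 1 by rewrite r1 andbT (le_trans _ r0) // lerN10.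
rewrite -cos_norm; move: ht; rewrite le_eqVlt => /orP[/eqP->|ht].
  by rewrite acosK ?in_itv.
apply: ltW; rewrite -{1}(acosK (x:=r)) ?in_itv //.
rewrite ltr_cos // ?in_itv /= ?acos_ge0 ?acos_lepi // normr_ge0 /=.
by rewrite (le_trans (ltW ht)) // acos_lepi.
Qed.

Lemma sigma_ge0 q (r : R) : 0 <= sigma q r.
Proof.
by rewrite /sigma; case: ifP => _ //; apply: exprn_even_ge0; rewrite odd_double.
Qed.

(* If |t0| <= arccos r then cos t0 >= r, so a perturbation of t0 of size
   Kc r changes cos by at most Kc cos t0. *)
Lemma sigma_le_perturbed q (t t0 r Kc : R) : 0 < r <= 1 -> `|t0| <= acos r ->
  0 <= Kc -> `|t - t0| <= Kc * r ->
  `|sigma q t| <= (1 + Kc) ^+ (q.+1).*2 * sigma q t0.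
Proof.
move=> /andP[r0 r1] ht0 K0 htt.
have ct0 : r <= cos t0 by apply: (cos_ge_acos _ ht0); rewrite r1 andbT ltW.
have -> : sigma q t0 = cos t0 ^+ (q.+1).*2.
  by rewrite /sigma ifT // (le_trans ht0) // acos_le_pihalf // ltW.
rewrite -exprMn.
apply: (@le_trans _ _ (`|cos t| ^+ (q.+1).*2)).
  by rewrite /sigma; case: ifP => _; rewrite ?normrX // normr0 exprn_ge0.
have ct0_ge0 : 0 <= cos t0 by apply: le_trans ct0; apply: ltW.
rewrite lerXn2r // ?nnegrE ?mulr_ge0 ?addr_ge0 //.
have := cos_lipschitz t t0; have := ler_normD (cos t - cos t0) (cos t0).
have : Kc * r <= Kc * cos t0 by rewrite ler_wpM2l.
rewrite subrK (ger0_norm ct0_ge0); lra.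
Qed.

End Sigma.

Section Element.
Variables (R : realType) (d : nat).
Local Notation pt := 'rV[R]_d.

Lemma rho_le_node q (phi : pt -> R) eps h K x y :
  0 < h -> h < eps -> 0 <= K ->
  `|phi y| <= eps * acos (h / eps) -> `|phi x - phi y| <= K * h ->
  `|rho q phi eps x| <= (1 + K) ^+ (q.+1).*2 * rho q phi eps y.
Proof.
move=> h0 heps K0 hy hxy.
have eps0 : 0 < eps by apply: lt_trans heps.
have neps z : `|z / eps| = `|z| / eps.
  by rewrite normrM normrV ?unitfE ?gt_eqF // (gtr0_norm eps0).
rewrite /rho; apply: (@sigma_le_perturbed _ q _ _ (h / eps) K) => //.
- by rewrite divr_gt0 //= ler_pdivrMr // mul1r ltW.
- by rewrite neps ler_pdivrMr // mulrC.
- by rewrite -mulrBl neps mulrA ler_pM2r ?invr_gt0.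
Qed.

Lemma affine_sqr_le (T : simplex R d) (v : pt -> R) a (b : pt) H0 x y :
  (forall x, sset T x -> v x = a + \sum_k x ord0 k * b ord0 k) ->
  sset T x -> sset T y -> enorm (x - y) <= H0 ->
  v x ^+ 2 + enorm b ^+ 2 <=
  (2 * (d%:R * H0) ^+ 2 + 2) * (v y ^+ 2 + enorm b ^+ 2).
Proof.
move=> hv Tx Ty hxy.
have H0_ge0 : 0 <= H0 by apply: le_trans hxy; exact: enorm_ge0.
rewrite (affine_diff hv Tx Ty); set D := \sum_k _.
have D_le : `|D| <= d%:R * H0 * enorm b.
  rewrite -mulrA; apply: le_trans (dot_le_enorm _ _) _.
  by rewrite ler_wpM2l // ler_wpM2r ?enorm_ge0.
have D2_le : D ^+ 2 <= (d%:R * H0) ^+ 2 * enorm b ^+ 2.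
  rewrite -exprMn -real_normK ?num_real // lerXn2r // nnegrE.
  by rewrite !mulr_ge0 ?enorm_ge0.
have := sqr_ge0 (v y - D); have := sqr_ge0 (enorm b).
have := mulr_ge0 (sqr_ge0 (d%:R * H0)) (sqr_ge0 (v y)).
move: D2_le; set X := (d%:R * H0) ^+ 2; lra.
Qed.

Lemma supnormT_le (T : simplex R d) (f : pt -> R) y B :
  sset T y -> (forall x, sset T x -> `|f x| <= B) -> 0 <= supnormT T f <= B.
Proof.
move=> Ty fB; set S := [set r | exists x, sset T x /\ r = `|f x|].
have S_ne : S !=set0 by exists `|f y|, y.
have S_ub : ubound S B by move=> _ [x [Tx ->]]; exact: fB.
rewrite ge_sup // andbT; apply: le_trans (normr_ge0 (f y)) _.
by apply: sup_upper_bound; [split; last exists B | exists y].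
Qed.

Lemma supnormT_H1sq_le_QT (T : simplex R d) (v rhof : pt -> R) (L : nat)
  (w : 'I_L -> R) (bh : 'I_L -> pt) (l0 : 'I_L) (K2 H0 : R) :
  Defs.nondegenerate T ->
  (exists a (b : pt), forall x, sset T x -> v x = a + \sum_k x ord0 k * b ord0 k) ->
  (forall x y, sset T x -> sset T y -> enorm (x - y) <= H0) ->
  (forall x, sset T x -> `|rhof x| <= K2 * rhof (affmap T (bh l0))) ->
  (forall x, 0 <= rhof x) ->
  0 <= K2 -> 0 < w l0 -> (forall l, 0 <= w l) -> (forall l, ref_simplex (bh l)) ->
  supnormT T rhof * H1sq T v <=
  ((2 * (d%:R * H0) ^+ 2 + 2) * K2 / (w l0 * refint (fun _ : pt => 1))) *
    QT w bh T (fun x => rhof x * (v x ^+ 2 + enorm (gradT T v) ^+ 2)).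
Proof.
move=> nd [a [b hv]] hH0 hrho rho_ge0 K2_ge0 wl0_gt0 w_ge0 bh_ref.
rewrite (gradT_affine nd hv).
set y := affmap T (bh l0); have Ty : sset T y by apply: affmap_in_sset.
have /andP[S_ge0 S_le] := supnormT_le Ty hrho.
set A := 2 * (d%:R * H0) ^+ 2 + 2; set P := v y ^+ 2 + enorm b ^+ 2.
set det := `|\det (edge_mx T)|; set vol1 := refint (fun _ : pt => 1).
have det_ge0 : 0 <= det by apply: normr_ge0.
have vol1_gt0 : 0 < vol1 by apply: refint1_gt0.
have A_ge0 : 0 <= A by rewrite addr_ge0 // mulr_ge0 // sqr_ge0.
have P_ge0 : 0 <= P by rewrite addr_ge0 // sqr_ge0.
have H1_le : H1sq T v <= det * (A * P).
  rewrite /H1sq /intT (gradT_affine nd hv) ler_wpM2l //.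
  apply: refint_le => [|xi /(affmap_in_sset T) Tx]; first by rewrite mulr_ge0.
  rewrite /= addr_ge0 ?sqr_ge0 //=.
  exact: affine_sqr_le hv Tx Ty (hH0 _ _ Tx Ty).
have node_le : w l0 * (rhof y * P) <= \sum_l w l * (rhof (affmap T (bh l)) *
    (v (affmap T (bh l)) ^+ 2 + enorm b ^+ 2)).
  rewrite (bigD1 l0) //= lerDl; apply: sumr_ge0 => l _.
  by rewrite !mulr_ge0 // addr_ge0 // sqr_ge0.
apply: (@le_trans _ _ (supnormT T rhof * (det * (A * P)))).
  by rewrite ler_wpM2l.
apply: (@le_trans _ _ (K2 * rhof y * (det * (A * P)))).
  by rewrite ler_wpM2r // !mulr_ge0.
have -> : K2 * rhof y * (det * (A * P)) =
   A * K2 / (w l0 * vol1) * (det * vol1 * (w l0 * (rhof y * P))).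
  by field; rewrite !gt_eqF.
apply: ler_wpM2l; first by rewrite divr_ge0 ?mulr_ge0 // ltW ?mulr_gt0.
rewrite /QT (_ : vol T = det * vol1) //.
apply: ler_wpM2l; first exact: mulr_ge0 det_ge0 (ltW vol1_gt0).
exact: node_le.
Qed.

Lemma rho_le_node_selected (Om U : set pt) (phi : pt -> R) c1 H0 q L
    (bh : 'I_L -> pt) eps nT (M : 'I_nT -> simplex R d) i l x :
  open U -> closure Om `<=` U -> smooth_on U phi ->
  (forall z, closure Om z -> gradnorm phi z <= c1) -> 0 <= c1 ->
  (forall x y, closure Om x -> closure Om y -> enorm (x - y) <= H0) ->
  is_mesh Om M -> 0 < meshsize M -> meshsize M < eps ->
  Ttilde phi bh eps (meshsize M) (M i) -> ref_simplex (bh l) -> sset (M i) x ->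
  `|rho q phi eps x| <=
    (1 + d%:R * c1) ^+ (q.+1).*2 * rho q phi eps (affmap (M i) (bh l)).
Proof.
move=> oU OU smU grad_le c1_ge0 hH0 mesh h_gt0 h_lt_eps sel bh_ref Tx.
have TO := sset_mesh_closure mesh (i := i).
have Ty := affmap_in_sset (M i) bh_ref.
apply: rho_le_node h_gt0 h_lt_eps _ _ _; first exact: mulr_ge0.
  by move/forallP: sel; apply.
have grad_le_T z : sset (M i) z -> gradnorm phi z <= c1 by move/TO/grad_le.
apply: le_trans (smooth_lipschitz_sset oU (subset_trans TO OU) smU grad_le_T Tx Ty) _.
by rewrite -mulrA ler_wpM2l // mulrC ler_wpM2l // (dist_le_meshsize hH0 mesh Tx Ty).
Qed.

End Element.

Theorem mainTheorem4 (R : realType) (n : nat) (Omega : set 'rV[R]_n.+1)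
  (phi : 'rV[R]_n.+1 -> R) (c0 c1 : R) (q L : nat) (w : 'I_L -> R)
  (bh : 'I_L -> 'rV[R]_n.+1) (sg : R) :
  ((n == 1) || (n == 2))%N ->
  polyhedral_domain Omega ->
  (exists U, open U /\ closure Omega `<=` U /\ smooth_on U phi) ->
  0 < c0 ->
  (forall x, closure Omega x -> c0 <= gradnorm phi x <= c1) ->
  (forall i, 0 < w i) -> \sum_i w i = 1 ->
  (forall i, ref_simplex (bh i)) -> quad_exact q w bh ->
  exists C : R, forall (h eps : R) (nT : nat)
    (M : 'I_nT -> simplex R n.+1) (v : 'rV[R]_n.+1 -> R),
    0 < h -> h < eps ->
    is_mesh Omega M -> meshsize M = h -> shape_bounded sg M ->
    in_Vtilde phi bh eps h M v ->
    lhs4 phi q bh eps h M v <= C * hnorm2 phi q w bh eps h M v.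
Proof.
case: L w bh => [|L] w bh _ [_ [_ [[x0 Ox0] [bdd _]]]] [U [oU [OU smU]]] _ hgrad
  w_gt0 w_sum1 bh_ref _.
  by move: w_sum1; rewrite big_ord0 => /eqP; rewrite eq_sym oner_eq0.
have grad_le z : closure Omega z -> gradnorm phi z <= c1 by move/hgrad/andP=> [].
have c1_ge0 : 0 <= c1 := le_trans (sqrtr_ge0 _) (grad_le x0 (subset_closure Ox0)).
have [H0 hH0] := closure_dist_bounded bdd.
exists ((2 * (n.+1%:R * H0) ^+ 2 + 2) * (1 + n.+1%:R * c1) ^+ (q.+1).*2 /
        (w ord0 * refint (fun _ : 'rV[R]_n.+1 => 1))).
move=> h eps nT M v h_gt0 h_lt_eps mesh hM _ [_ v_affine]; subst h.
have eps_gt0 : 0 < eps by apply: lt_trans h_lt_eps.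
rewrite /lhs4 /hnorm2 [X in _ <= X]mulrCA ler_wpM2l ?invr_ge0 ?(ltW eps_gt0) //.
rewrite mulr_sumr; apply: ler_sum => i sel.
apply: (supnormT_H1sq_le_QT (mesh.1 i) (v_affine i sel) _ _ (fun x => sigma_ge0 _ _)
  _ (w_gt0 ord0) (fun l => ltW (w_gt0 l)) bh_ref).
- by move=> x y /(sset_mesh_closure mesh) Ox /(sset_mesh_closure mesh) Oy; apply: hH0.
- by move=> x; apply: rho_le_node_selected oU OU smU grad_le c1_ge0 hH0 mesh _ _ sel _.
- by rewrite exprn_ge0 // addr_ge0 // mulr_ge0.
Qed.
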